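(* Let $V$ be a finite set and $\mathcal{F}\subseteq 2^V$ a minimal hereditary family with $\delta(\mathcal{F})\ge 12$. Then every $4$-element set $Q\in\mathcal{F}$ contains at most three mini-weight vertices.
   Context: A family $\mathcal{F}\subseteq 2^V$ is hereditary if $F'\subseteq F\in\mathcal{F}$ implies $F'\in\mathcal{F}$. For $x\in V$: $\mathcal{F}(x)=\{F\setminus\{x\}: x\in F\in\mathcal{F}\}$, $d_{\mathcal{F}}(x)=|\mathcal{F}(x)|$, $\delta(\mathcal{F})=\min_{x\in V}d_{\mathcal{F}}(x)$. A set $F\in\mathcal{F}$ is maximal if no other member strictly contains it; a hereditary $\mathcal{F}$ with $\delta(\mathcal{F})\ge 12$ is minimal if $\delta(\mathcal{F}\setminus\{F\})\le 11$ for every maximal $F\in\mathcal{F}$. $f_i(x)$ denotes the number of $i$-element sets in $\mathcal{F}(x)$. A vertex $x$ is mini-weight if $f_1(x)=4$, $f_2(x)=5$, $f_3(x)=2$. *)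

From mathcomp Require Import all_boot.
Set Implicit Arguments. Unset Strict Implicit. Unset Printing Implicit Defensive.

Definition hereditary (V : finType) (F : {set {set V}}) : Prop :=
  forall A B : {set V}, A \in F -> B \subset A -> B \in F.

Definition link (V : finType) (F : {set {set V}}) (x : V) : {set {set V}} :=
  [set A :\ x | A in [set A in F | x \in A]].

Definition deg (V : finType) (F : {set {set V}}) (x : V) : nat := #|link F x|.

Definition min_deg_ge (V : finType) (F : {set {set V}}) (k : nat) : Prop :=
  forall x : V, k <= deg F x.

Definition min_deg_le (V : finType) (F : {set {set V}}) (k : nat) : Prop :=
  exists x : V, deg F x <= k.

Definition maximal_in (V : finType) (F : {set {set V}}) (A : {set V}) : Prop :=
  A \in F /\ forall B : {set V}, B \in F -> A \proper B -> False.

Definition minimal12 (V : finType) (F : {set {set V}}) : Prop :=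
  hereditary F /\ min_deg_ge F 12 /\
  forall A : {set V}, maximal_in F A -> min_deg_le (F :\ A) 11.

Definition fcount (V : finType) (F : {set {set V}}) (x : V) (i : nat) : nat :=
  #|[set B in link F x | #|B| == i]|.

Definition mini_weight (V : finType) (F : {set {set V}}) (x : V) : bool :=
  [&& fcount F x 1 == 4, fcount F x 2 == 5 & fcount F x 3 == 2].

From mathcomp Require Import all_boot.
From mathcomp Require Import zify.

Set Implicit Arguments.
Unset Strict Implicit.

(* A mini-weight vertex x lies in exactly two 4-sets of F, since f_3(x) counts
   them. If Q and S are these two sets, the 3-sets Q \ x and S \ x lie in the
   link, and by heredity so do their six 2-subsets; as f_2(x) = 5, two of these
   coincide, so |Q \cap S| = 3. Now if all four vertices of a 4-set Q were
   mini-weight, take a in Q with partner S_a, a vertex w of Q outside S_a with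
   partner S_w, and a common point p of the 3-sets S_a \cap Q and S_w \cap Q:
   then Q, S_a and S_w are three distinct 4-sets through p. *)

Lemma card_setI_lt (T : finType) (A B : {set T}) :
  #|A| = #|B| -> A != B -> #|A :&: B| < #|A|.
Proof.
move=> cAB; apply: contraNT; rewrite -leqNgt => cA.
have eA : A :&: B = A by apply/eqP; rewrite eqEcard subsetIl cA.
have eB : A :&: B = B by apply/eqP; rewrite eqEcard subsetIr -cAB cA.
by rewrite -eA {1}eB.
Qed.

Lemma subsets_meet (T : finType) (A B Q : {set T}) :
  A \subset Q -> B \subset Q -> #|Q| < #|A| + #|B| -> exists2 p, p \in A & p \in B.
Proof.
move=> AQ BQ cQ.
have /card_gt0P[p] : 0 < #|A :&: B|.
  have /subset_leq_card : A :|: B \subset Q by rewrite subUset AQ.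
  by have := cardsUI A B; lia.
by rewrite inE => /andP[]; exists p.
Qed.

Section Link.

Variables (V : finType) (F : {set {set V}}).

Definition star (x : V) (k : nat) : {set {set V}} :=
  [set A in F | (x \in A) && (#|A| == k)].

Definition pairs (A : {set V}) : {set {set V}} :=
  [set B : {set V} | B \subset A & #|B| == 2].

Lemma in_link x B : (B \in link F x) = (x \notin B) && (x |: B \in F).
Proof.
apply/imsetP/andP => [[A] | [xB BF]].
- by rewrite inE => /andP[AF xA] ->; rewrite setD11 setD1K.
- by exists (x |: B); rewrite ?setU1K // inE BF setU11.
Qed.

Lemma link_hereditary x : hereditary F -> hereditary (link F x).
Proof.
move=> herF A B; rewrite !in_link => /andP[xA AF] BA.
rewrite (contra (subsetP BA x) xA) /=.
exact: herF AF (setUS _ BA).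
Qed.

Lemma fcount_star x k : fcount F x k = #|star x k.+1|.
Proof.
rewrite /fcount /star.
have -> : [set B in link F x | #|B| == k] = (fun A => A :\ x) @: star x k.+1.
  apply/setP => B; rewrite inE in_link; apply/andP/imsetP => [[/andP[xB BF] cB]|].
  - by exists (x |: B); rewrite ?setU1K // !inE BF eqxx cardsU1 xB (eqP cB) /=.
  - case=> A; rewrite !inE => /and3P[AF xA cA] ->.
    by rewrite setD11 setD1K // AF (cardsD1 x) xA in cA *.
rewrite card_in_imset // => A B; rewrite !inE => /and3P[_ xA _] /and3P[_ xB _] eqAB.
by rewrite -(setD1K xA) -(setD1K xB) eqAB.
Qed.

Lemma card_pairs A : #|pairs A| = 'C(#|A|, 2).
Proof. exact: cards_draws. Qed.

Lemma pairs_disjoint A B : #|A :&: B| <= 1 -> pairs A :&: pairs B = set0.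
Proof.
move=> cAB; apply/setP => C; rewrite !inE.
apply/negbTE/negP => /andP[/andP[CA /eqP cC] /andP[CB _]].
have /subset_leq_card : C \subset A :&: B by rewrite subsetI CA CB.
by rewrite cC; lia.
Qed.

Lemma pairs_sub_link x A :
  hereditary F -> A \in link F x -> pairs A \subset [set B in link F x | #|B| == 2].
Proof.
move=> herF AL; apply/subsetP => B; rewrite !inE => /andP[BA ->].
by rewrite (link_hereditary herF AL BA).
Qed.

Lemma link_triples_meet x T U :
    hereditary F -> fcount F x 2 <= 5 ->
    T \in link F x -> U \in link F x -> #|T| = 3 -> #|U| = 3 ->
  2 <= #|T :&: U|.
Proof.
move=> herF f2 TL UL cT cU; rewrite leqNgt; apply/negP => cTU.
have /subset_leq_card : pairs T :|: pairs U \subset [set B in link F x | #|B| == 2].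
  by rewrite subUset !pairs_sub_link.
have := cardsUI (pairs T) (pairs U).
rewrite pairs_disjoint // cards0 !card_pairs cT cU.
by rewrite /fcount in f2; rewrite -[ 'C(3, 2)]/3; lia.
Qed.

Lemma mini_weight_quads_meet x S Q :
    hereditary F -> mini_weight F x -> S \in star x 4 -> Q \in star x 4 -> S != Q ->
  #|S :&: Q| = 3.
Proof.
move=> herF /and3P[_ /eqP f2 _] Sstar Qstar SQ.
have quad_link A : A \in star x 4 -> A :\ x \in link F x /\ #|A :\ x| = 3.
  rewrite !inE => /and3P[AF xA /eqP cA]; rewrite in_link setD11 setD1K //.
  by split=> //; move: cA; rewrite (cardsD1 x) xA; lia.
have [[SL cSx] [QL cQx]] := (quad_link S Sstar, quad_link Q Qstar).
have xSQ : x \in S :&: Q by move: Sstar Qstar; rewrite !inE => /and3P[_ -> _] /and3P[_ -> _].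
have SQx : S :\ x != Q :\ x.
  apply: contra SQ => /eqP eSQ; move: xSQ; rewrite inE => /andP[xS xQ].
  by rewrite -(setD1K xS) eSQ setD1K.
have ge2 := link_triples_meet herF (eq_leq f2) SL QL cSx cQx.
have lt3 := card_setI_lt (etrans cSx (esym cQx)) SQx.
by rewrite (cardsD1 x) xSQ setDIl; move: ge2 lt3; rewrite cSx; lia.
Qed.

Lemma mini_weight_partner x Q :
    hereditary F -> mini_weight F x -> Q \in star x 4 ->
  exists S, star x 4 :\ Q = [set S] /\ #|S :&: Q| = 3.
Proof.
move=> herF mwx Qstar.
have /cards1P[S eS] : #|star x 4 :\ Q| == 1.
  move: (mwx) => /and3P[_ _ /eqP].
  by rewrite fcount_star (cardsD1 Q (star x 4)) Qstar add1n => -[->].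
exists S; split=> //.
have /setD1P[SQ Sstar] : S \in star x 4 :\ Q by rewrite eS set11.
exact: mini_weight_quads_meet herF mwx Sstar Qstar SQ.
Qed.

End Link.

Theorem mainTheorem7 (V : finType) (F : {set {set V}}) :
  hereditary F -> min_deg_ge F 12 -> minimal12 F ->
  forall Q : {set V}, Q \in F -> #|Q| = 4 ->
  #|[set x in Q | mini_weight F x]| <= 3.
Proof.
move=> herF _ _ Q QF cQ; rewrite leqNgt; apply/negP => gt3.
have mwQ y : y \in Q -> mini_weight F y.
  have /eqP <- : [set x in Q | mini_weight F x] == Q.
    by rewrite eqEcard cQ gt3 andbT; apply/subsetP => z; rewrite inE => /andP[].
  by rewrite inE => /andP[].
have Qstar y : y \in Q -> Q \in star F y 4 by move=> yQ; rewrite !inE QF yQ cQ.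
have partner y : y \in Q -> exists S, star F y 4 :\ Q = [set S] /\ #|S :&: Q| = 3.
  by move=> yQ; apply: mini_weight_partner herF (mwQ y yQ) (Qstar y yQ).
have /card_gt0P[a aQ] : 0 < #|Q| by rewrite cQ.
have [Sa [eSa cSaQ]] := partner a aQ.
have /subsetPn[w wQ wSa] : ~~ (Q \subset Sa).
  by apply/negP => /setIidPr eQ; move: cSaQ; rewrite eQ cQ.
have [Sw [eSw cSwQ]] := partner w wQ.
have [p] : exists2 p, p \in Sa :&: Q & p \in Sw :&: Q.
  by apply: subsets_meet (subsetIr Sa Q) (subsetIr Sw Q) _; rewrite cQ cSaQ cSwQ.
rewrite !inE => /andP[pSa pQ] /andP[pSw _].
have [Sp [eSp _]] := partner p pQ.
have partner_mem y S : star F y 4 :\ Q = [set S] -> [&& S != Q, S \in F, y \in S & #|S| == 4].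
  by move=> eS; have := set11 S; rewrite -eS !inE.
have /and4P[SaQ SaF _ cSa] := partner_mem _ _ eSa.
have /and4P[SwQ SwF wSw cSw] := partner_mem _ _ eSw.
have : Sa \in [set Sp] by rewrite -eSp !inE SaQ SaF pSa cSa.
have : Sw \in [set Sp] by rewrite -eSp !inE SwQ SwF pSw cSw.
by rewrite !inE => /eqP <- /eqP eSaw; move: wSa; rewrite eSaw wSw.
Qed.
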